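(* Let $\mathcal{P}\subset\mathbb{R}^d$ be a finite set of $n$ item vectors, $\bm{q}\in\mathbb{R}^d$ a query vector, $k>1$ an integer with $k\le n$, $\lambda\in[0,1]$ and $\mu>0$, and assume $\langle \bm{x},\bm{y}\rangle\ge 0$ for all $\bm{x},\bm{y}\in\mathcal{P}\cup\{\bm{q}\}$. Let $f$ denote either $f_{avg}$ or $f_{max}$ (defined in the context), and let $\mathcal{S}^*\in\arg\max_{\mathcal{T}\subseteq\mathcal{P},|\mathcal{T}|=k} f(\mathcal{T})$. Let $\mathcal{S}$ be the output of the Greedy algorithm run with this $f$, and let $\mathcal{S}'$ be a $k$MIPS result for $\bm{q}$, i.e., a set of $k$ vectors of $\mathcal{P}$ such that $\langle \bm{p},\bm{q}\rangle\ge\langle \bm{p}',\bm{q}\rangle$ for all $\bm{p}\in\mathcal{S}'$, $\bm{p}'\in\mathcal{P}\setminus\mathcal{S}'$. Define $\overline{f}(\mathcal{T}) := \frac{\lambda}{k}\sum_{\bm{p}\in\mathcal{T}}\langle \bm{p},\bm{q}\rangle$, and let $div^* = \max_{\mathcal{T}\subseteq\mathcal{P},|\mathcal{T}|=k}\frac{2\mu(1-\lambda)}{k(k-1)}\sum_{\{\bm{p}_x,\bm{p}_y\}\subseteq\mathcal{T},\,\bm{p}_x\ne\bm{p}_y}\langle\bm{p}_x,\bm{p}_y\rangle$ if $f=f_{avg}$, and $div^*=\max_{\bm{p}_x\neq\bm{p}_y\in\mathcal{P}}\mu(1-\lambda)\langle\bm{p}_x,\bm{p}_y\rangle$ if $f=f_{max}$.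 Suppose $f(\mathcal{S}')>0$. Then $$f(\mathcal{S})\ \ge\ \max\!\Big(\tfrac{f(\mathcal{S}')}{\overline{f}(\mathcal{S}')}\cdot f(\mathcal{S}^* ),\ f(\mathcal{S}^* )-div^*\Big)-\Delta',\qquad\text{where } \Delta'=\max\big(0,\ f(\mathcal{S}')-f(\mathcal{S})\big).$$
   Context: For $\mathcal{S}\subseteq\mathcal{P}$ define $f_{avg}(\mathcal{S}) = \frac{\lambda}{k}\sum_{\bm{p}\in\mathcal{S}}\langle\bm{p},\bm{q}\rangle - \frac{2\mu(1-\lambda)}{k(k-1)}\sum_{\{\bm{p},\bm{p}'\}\subseteq\mathcal{S},\,\bm{p}\neq\bm{p}'}\langle\bm{p},\bm{p}'\rangle$ (sum over unordered pairs of distinct elements), and $f_{max}(\mathcal{S}) = \frac{\lambda}{k}\sum_{\bm{p}\in\mathcal{S}}\langle\bm{p},\bm{q}\rangle - \mu(1-\lambda)\max_{\bm{p}\neq\bm{p}'\in\mathcal{S}}\langle\bm{p},\bm{p}'\rangle$, where a maximum over an empty collection of pairs is taken to be $0$. Marginal gains: $\Delta_{f_{avg}}(\bm{p},\mathcal{S}) = \frac{\lambda}{k}\langle\bm{p},\bm{q}\rangle - \frac{2\mu(1-\lambda)}{k(k-1)}\sum_{\bm{p}'\in\mathcal{S}}\langle\bm{p},\bm{p}'\rangle$ and $\Delta_{f_{max}}(\bm{p},\mathcal{S}) = \frac{\lambda}{k}\langle\bm{p},\bm{q}\rangle - \mu(1-\lambda)\big(\max_{\bm{p}_x\ne\bm{p}_y\in\mathcal{S}\cup\{\bm{p}\}}\langle\bm{p}_x,\bm{p}_y\rangle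 - \max_{\bm{p}_x\ne\bm{p}_y\in\mathcal{S}}\langle\bm{p}_x,\bm{p}_y\rangle\big)$ (same empty-max convention). Greedy algorithm: set $\mathcal{S}=\{\bm{p}^*\}$ with $\bm{p}^*\in\arg\max_{\bm{p}\in\mathcal{P}}\langle\bm{p},\bm{q}\rangle$; then for $i=2,\dots,k$, choose $\bm{p}^*\in\arg\max_{\bm{p}\in\mathcal{P}\setminus\mathcal{S}}\Delta_f(\bm{p},\mathcal{S})$ and set $\mathcal{S}\leftarrow\mathcal{S}\cup\{\bm{p}^*\}$ (ties broken arbitrarily); output $\mathcal{S}$. *)

From mathcomp Require Import all_boot all_order all_algebra.
Set Implicit Arguments. Unset Strict Implicit. Unset Printing Implicit Defensive.
Import Order.TTheory GRing.Theory Num.Theory.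
Local Open Scope ring_scope.

Section Defs.
Variables (R : realFieldType) (d n : nat).
Implicit Types (x y : 'rV[R]_d) (S T : {set 'I_n}).

Definition dot x y : R := \sum_(i < d) x 0 i * y 0 i.

(* maximum of a finite list of reals; 0 for the empty list
   (the paper's convention for empty maxima). *)
Definition seqmax (l : seq R) : R := foldr Num.max (head 0 l) l.

Variables (v : 'I_n -> 'rV[R]_d) (q : 'rV[R]_d) (k : nat) (lam mu : R).

Definition fbar S : R := lam / k%:R * \sum_(p in S) dot (v p) q.

Definition pairsum S : R :=
  \sum_(x in S) \sum_(y in S | (x < y)%N) dot (v x) (v y).

Definition pairmax S : R :=
  seqmax [seq dot (v xy.1) (v xy.2) | xy <- enum (setX S S) & xy.1 != xy.2].

Definition f_avg S : R :=
  fbar S - 2 * mu * (1 - lam) / (k%:R * (k%:R - 1)) * pairsum S.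

Definition f_max S : R := fbar S - mu * (1 - lam) * pairmax S.

Definition gain_avg p S : R :=
  lam / k%:R * dot (v p) q
  - 2 * mu * (1 - lam) / (k%:R * (k%:R - 1)) * \sum_(p' in S) dot (v p) (v p').

Definition gain_max p S : R :=
  lam / k%:R * dot (v p) q - mu * (1 - lam) * (pairmax (p |: S) - pairmax S).

Inductive objective := Avg | Max.

Definition fobj (o : objective) S : R :=
  match o with Avg => f_avg S | Max => f_max S end.

Definition gain (o : objective) p S : R :=
  match o with Avg => gain_avg p S | Max => gain_max p S end.

Definition divstar (o : objective) : R :=
  match o with
  | Avg => seqmax [seq 2 * mu * (1 - lam) / (k%:R * (k%:R - 1)) * pairsum T
                   | T <- enum [set T : {set 'I_n} | #|T| == k]]
  | Max => mu * (1 - lam) * pairmax [set: 'I_n]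
  end.

(* s = (p_1,...,p_k) is a possible run of the Greedy algorithm (ties broken
   arbitrarily): p_1 maximizes <p,q> over P, and p_{i+1} maximizes
   gain(p, {p_1..p_i}) over P \ {p_1..p_i}. *)
Definition greedy_run (o : objective) (s : k.-tuple 'I_n) : Prop :=
  forall i : 'I_k,
    let Si := [set tnth s j | j : 'I_k & (j < i)%N] in
    tnth s i \notin Si /\
    (if (i == 0 :> nat)
     then forall p, dot (v p) q <= dot (v (tnth s i)) q
     else forall p, p \notin Si -> gain o p Si <= gain o (tnth s i) Si).

Definition greedy_output (o : objective) S : Prop :=
  exists s : k.-tuple 'I_n, greedy_run o s /\ S = [set x in s].

Definition kMIPS S : Prop :=
  #|S| = k /\ forall p p', p \in S -> p' \notin S -> dot (v p') q <= dot (v p) q.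

End Defs.

(* Both candidate lower bounds are already bounded by f(S'), so the theorem
   follows from f(S') <= f(S) + Delta'.  Write f = fbar - pen with a penalty
   0 <= pen(T) <= divstar for |T| = k.  Since S' maximises fbar among k-sets,
   f(Sstar) <= fbar(Sstar) <= fbar(S') = f(S') + pen(S') <= f(S') + divstar,
   and f(S')/fbar(S') lies in [0, 1], so f(S')/fbar(S') * f(Sstar) <= f(S'). *)
From mathcomp Require Import all_boot all_order all_algebra.
Set Implicit Arguments. Unset Strict Implicit. Unset Printing Implicit Defensive.
Import Order.TTheory GRing.Theory Num.Theory.
Local Open Scope ring_scope.

Lemma ler_sum_card_eq (R : numDomainType) (T : finType) (F : T -> R) (A B : {set T}) :
  #|A| = #|B| -> {in A & B, forall x y, F x <= F y} ->
  \sum_(x in A) F x <= \sum_(y in B) F y.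
Proof.
move=> AB leAB.
have [/eqP A0|A_gt0] := posnP #|A|.
  move: A0 (A0); rewrite {1}AB !cards_eq0 => /eqP-> /eqP->.
  by rewrite !big_set0.
have double_count : (\sum_(x in A) F x) *+ #|B| <= (\sum_(y in B) F y) *+ #|A|.
  rewrite -!sumrMnl; under eq_bigr do rewrite -sumr_const.
  under [X in _ <= X]eq_bigr do rewrite -sumr_const.
  rewrite [X in _ <= X]exchange_big /=.
  by apply: ler_sum => x xA; apply: ler_sum => y yB; exact: leAB.
by rewrite -AB lerMn2r gtn_eqF in double_count.
Qed.

Lemma ler_sum_top (R : numDomainType) (T : finType) (F : T -> R) (S A : {set T}) :
  #|A| = #|S| -> {in S & ~: S, forall x y, F y <= F x} ->
  \sum_(x in A) F x <= \sum_(x in S) F x.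
Proof.
move=> AS topS.
rewrite (big_setID S) [X in _ <= X](big_setID A) /= setIC lerD2l.
apply: ler_sum_card_eq.
  by apply/eqP; rewrite -(eqn_add2l #|S :&: A|) {1}setIC !cardsID AS.
by move=> x y; rewrite !inE => /andP[xS _] /andP[_ yS]; apply: topS; rewrite ?inE.
Qed.

Lemma seqmax_ge (R : realFieldType) (l : seq R) x : x \in l -> x <= seqmax l.
Proof.
rewrite /seqmax; elim: l (head 0 l) => //= y l IH a.
by rewrite inE le_max => /orP[/eqP->|/IH->]; rewrite ?lexx ?orbT.
Qed.

Lemma seqmax_le (R : realFieldType) (l : seq R) M :
  0 <= M -> (forall x, x \in l -> x <= M) -> seqmax l <= M.
Proof.
case: l => [//|y l] _ leM; rewrite /seqmax /=.
have yM : y <= M by apply: leM; exact: mem_head.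
have {}leM : {in l, forall x, x <= M} by move=> x xl; apply: leM; rewrite inE xl orbT.
rewrite ge_max yM /=; elim: l leM => //= z l IH leM.
by rewrite ge_max leM ?mem_head // IH // => x xl; apply: leM; rewrite inE xl orbT.
Qed.

Lemma seqmax_ge0 (R : realFieldType) (l : seq R) :
  (forall x, x \in l -> 0 <= x) -> 0 <= seqmax l.
Proof.
case: l => [//|y l] ge0.
by apply: le_trans (ge0 y (mem_head _ _)) (seqmax_ge (mem_head _ _)).
Qed.

Section Penalty.

Variables (R : realFieldType) (d n : nat) (v : 'I_n -> 'rV[R]_d) (q : 'rV[R]_d).
Variables (k : nat) (lam mu : R).
Hypotheses (lam_ge0 : 0 <= lam) (lam_le1 : lam <= 1) (mu_ge0 : 0 <= mu).
Hypothesis dot_ge0 : forall x y : 'I_n, 0 <= dot (v x) (v y).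
Implicit Types (o : objective) (T : {set 'I_n}).

Lemma pairsum_ge0 T : 0 <= pairsum v T.
Proof. by apply: sumr_ge0 => x _; apply: sumr_ge0. Qed.

Lemma pairmax_ge0 T : 0 <= pairmax v T.
Proof. by apply: seqmax_ge0 => _ /mapP[xy _ ->]. Qed.

Lemma pairmax_le_setT T : pairmax v T <= pairmax v [set: 'I_n].
Proof.
apply: seqmax_le => [|z /mapP[[x y]]]; first exact: pairmax_ge0.
rewrite mem_filter => /andP[xy _] ->; apply/seqmax_ge/map_f.
by rewrite mem_filter xy mem_enum in_setX !inE.
Qed.

Definition avg_weight : R := 2 * mu * (1 - lam) / (k%:R * (k%:R - 1)).

Definition penalty (o : objective) (T : {set 'I_n}) : R :=
  match o with
  | Avg => avg_weight * pairsum v T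
  | Max => mu * (1 - lam) * pairmax v T
  end.

Lemma fobjE o T : fobj v q k lam mu o T = fbar v q k lam T - penalty o T.
Proof. by case: o. Qed.

Lemma avg_weight_ge0 : 0 <= avg_weight.
Proof.
apply: divr_ge0; first by rewrite !mulr_ge0 // subr_ge0.
by case: k => [|m]; rewrite ?mul0r // mulr_ge0 // subr_ge0 ler1n.
Qed.

Lemma penalty_ge0 o T : 0 <= penalty o T.
Proof.
case: o => /=; apply: mulr_ge0; rewrite ?avg_weight_ge0 ?pairsum_ge0 ?pairmax_ge0 //.
by rewrite mulr_ge0 // subr_ge0.
Qed.

Lemma penalty_le_divstar o T : #|T| = k -> penalty o T <= divstar v k lam mu o.
Proof.
move=> cardT; case: o => /=.
  by apply/seqmax_ge/map_f; rewrite mem_enum inE cardT.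
by rewrite ler_wpM2l ?mulr_ge0 ?subr_ge0 ?pairmax_le_setT.
Qed.

Lemma fbar_le_kMIPS (S' T : {set 'I_n}) :
  kMIPS v q k S' -> #|T| = k -> fbar v q k lam T <= fbar v q k lam S'.
Proof.
move=> [cardS' topS'] cardT; rewrite /fbar.
apply: ler_wpM2l; first exact: divr_ge0.
apply: ler_sum_top; first by rewrite cardT cardS'.
by move=> x y xS' yS'; apply: topS'; rewrite // -in_setC.
Qed.

Lemma fobj_le_fbar_kMIPS o (S' T : {set 'I_n}) :
  kMIPS v q k S' -> #|T| = k -> fobj v q k lam mu o T <= fbar v q k lam S'.
Proof.
move=> MIPS cardT; rewrite fobjE.
by apply: le_trans (fbar_le_kMIPS MIPS cardT); rewrite gerBl penalty_ge0.
Qed.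

Lemma ratio_bound_le_kMIPS o (S' T : {set 'I_n}) :
  kMIPS v q k S' -> #|T| = k -> 0 < fobj v q k lam mu o S' ->
  fobj v q k lam mu o S' / fbar v q k lam S' * fobj v q k lam mu o T
    <= fobj v q k lam mu o S'.
Proof.
move=> MIPS cardT F_gt0.
have fbar_gt0 : 0 < fbar v q k lam S'.
  by apply: lt_le_trans F_gt0 _; rewrite fobjE gerBl penalty_ge0.
rewrite -mulrA ler_piMr ?(ltW F_gt0) // ler_pdivrMl // mulr1.
exact: fobj_le_fbar_kMIPS.
Qed.

Lemma divstar_bound_le_kMIPS o (S' T : {set 'I_n}) :
  kMIPS v q k S' -> #|T| = k ->
  fobj v q k lam mu o T - divstar v k lam mu o <= fobj v q k lam mu o S'.
Proof.
move=> MIPS cardT; rewrite lerBlDr.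
apply: le_trans (fobj_le_fbar_kMIPS o MIPS cardT) _.
rewrite fobjE -addrA lerDl addrC subr_ge0.
by apply: penalty_le_divstar; case: MIPS.
Qed.

End Penalty.

Theorem theorem1 (R : realFieldType) (d n k : nat)
    (v : 'I_n -> 'rV[R]_d) (q : 'rV[R]_d) (lam mu : R) (o : objective)
    (Sstar S S' : {set 'I_n}) :
  injective v -> (1 < k)%N -> (k <= n)%N ->
  0 <= lam -> lam <= 1 -> 0 < mu ->
  (forall x y : 'I_n, 0 <= dot (v x) (v y)) ->
  (forall x : 'I_n, 0 <= dot (v x) q) -> 0 <= dot q q ->
  #|Sstar| = k ->
  (forall T : {set 'I_n}, #|T| = k -> fobj v q k lam mu o T <= fobj v q k lam mu o Sstar) ->
  greedy_output v q k lam mu o S ->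
  kMIPS v q k S' ->
  0 < fobj v q k lam mu o S' ->
  Num.max (fobj v q k lam mu o S' / fbar v q k lam S' * fobj v q k lam mu o Sstar)
          (fobj v q k lam mu o Sstar - divstar v k lam mu o)
    - Num.max 0 (fobj v q k lam mu o S' - fobj v q k lam mu o S)
  <= fobj v q k lam mu o S.
Proof.
move=> _ _ _ lam_ge0 lam_le1 /ltW mu_ge0 dot_ge0 _ _ cardSstar _ _ MIPS F_gt0.
have bounds_le_fS' :
    Num.max (fobj v q k lam mu o S' / fbar v q k lam S' * fobj v q k lam mu o Sstar)
            (fobj v q k lam mu o Sstar - divstar v k lam mu o)
      <= fobj v q k lam mu o S'.
  by rewrite ge_max ratio_bound_le_kMIPS ?divstar_bound_le_kMIPS.
rewrite lerBlDr; apply: le_trans bounds_le_fS' _.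
by rewrite -lerBlDl le_max lexx orbT.
Qed.
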